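(* Suppose Assumptions 1–4 hold and $p$ is convex. Let $$s=\inf\{q\ge0 : p(q)=\min_n C_n'(0)\},\qquad t=\inf\{q\ge0:\ \min_n C_n'(q)\ge p(q)+q\,\partial_+p(q)\}.$$ If $\partial_-p(s)<0$, then every monopoly output $\mathbf{x}^P$ satisfies $$\gamma(\mathbf{x}^P)\ge\frac{\partial_-p(s)}{3\,\partial_-p(s)+\partial_+p(t)}.$$
   Context: Cournot model: $N$ suppliers, inverse demand $p:[0,\infty)\to[0,\infty)$, supplier $n$ has cost $C_n:[0,\infty)\to[0,\infty)$ and chooses $x_n\ge0$; $X=\sum_n x_n$. $\partial_\pm$ denote right/left derivatives; $C_n'(0)$ is the right derivative at $0$. Assumption 1: each $C_n$ is convex, continuous, nondecreasing on $[0,\infty)$, continuously differentiable on $(0,\infty)$, with $C_n(0)=0$. Assumption 2: $p$ is continuous, nonnegative, nonincreasing, $p(0)>0$; its right derivative at $0$ exists and at every $q>0$ its left and right derivatives exist. Assumption 3: there exists $R>0$ such that $p(R)\le\min_n C_n'(0)$. Assumption 4: $p(0)>\min_n C_n'(0)$. A monopoly output is an optimal solution $\mathbf{x}^P$ of $\max_{\mathbf{x}\ge0}\ p\!\left(\sum_n x_n\right)\sum_n x_n-\sum_n C_n(x_n)$. Social welfare of $\mathbf{x}\ge0$: $W(\mathbf{x})=\int_0^X p(q)\,dq-\sum_{n=1}^N C_n(x_n)$; a social optimum $\mathbf{x}^S$ maximizes $W$. Efficiency: $\gamma(\mathbf{x})=W(\mathbf{x})/W(\mathbf{x}^S)$.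 *)

From Stdlib Require Import Reals Lra ClassicalEpsilon.
Open Scope R_scope.

Fixpoint sumN (N : nat) (f : nat -> R) : R :=
  match N with O => 0 | S k => sumN k f + f k end.

(* min_{n <= k} f n ; for N suppliers use minN (N-1) f *)
Fixpoint minN (k : nat) (f : nat -> R) : R :=
  match k with O => f O | S j => Rmin (minN j f) (f (S j)) end.

Definition min_over (N : nat) (f : nat -> R) : R := minN (N - 1) f.

Definition right_deriv (f : R -> R) (x l : R) : Prop :=
  forall eps, 0 < eps -> exists delta, 0 < delta /\
    forall h, 0 < h < delta -> Rabs ((f (x + h) - f x) / h - l) < eps.
Definition left_deriv (f : R -> R) (x l : R) : Prop :=
  forall eps, 0 < eps -> exists delta, 0 < delta /\
    forall h, - delta < h < 0 -> Rabs ((f (x + h) - f x) / h - l) < eps.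

Definition cont_nonneg (f : R -> R) : Prop :=
  forall q, 0 <= q -> forall eps, 0 < eps -> exists delta, 0 < delta /\
    forall y, 0 <= y -> Rabs (y - q) < delta -> Rabs (f y - f q) < eps.

Definition convex_nonneg (f : R -> R) : Prop :=
  forall x y l, 0 <= x -> 0 <= y -> 0 <= l <= 1 ->
    f (l * x + (1 - l) * y) <= l * f x + (1 - l) * f y.

Definition nondecr_nonneg (f : R -> R) : Prop :=
  forall x y, 0 <= x <= y -> f x <= f y.
Definition nonincr_nonneg (f : R -> R) : Prop :=
  forall x y, 0 <= x <= y -> f y <= f x.

Definition is_inf (S : R -> Prop) (s : R) : Prop :=
  (forall q, S q -> s <= q) /\ (forall b, (forall q, S q -> b <= q) -> b <= s).

(* Riemann integral int_a^b f (value of RiemannInt when f is integrable) *)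
Definition RInt (f : R -> R) (a b : R) : R :=
  epsilon (inhabits 0)
    (fun v => exists pr : Riemann_integrable f a b, RiemannInt pr = v).

Definition nonneg_vec (N : nat) (x : nat -> R) : Prop :=
  forall n, (n < N)%nat -> 0 <= x n.

Definition total (N : nat) (x : nat -> R) : R := sumN N x.

Definition profit (N : nat) (p : R -> R) (C : nat -> R -> R) (x : nat -> R) : R :=
  p (total N x) * total N x - sumN N (fun n => C n (x n)).

Definition welfare (N : nat) (p : R -> R) (C : nat -> R -> R) (x : nat -> R) : R :=
  RInt p 0 (total N x) - sumN N (fun n => C n (x n)).

Definition monopoly_output N p C (x : nat -> R) : Prop :=
  nonneg_vec N x /\ forall y, nonneg_vec N y -> profit N p C y <= profit N p C x.

Definition social_optimum N p C (x : nat -> R) : Prop :=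
  nonneg_vec N x /\ forall y, nonneg_vec N y -> welfare N p C y <= welfare N p C x.

Definition efficiency N p C (xS x : nat -> R) : R :=
  welfare N p C x / welfare N p C xS.

(* Let X be the monopoly's total output, c = min_n C_n'(0), d = p'(X+),
   l = p'(s-) < 0 and r = p'(t+).  The proof compares welfares directly:
   - first-order conditions of the monopoly (revenue q p(q) cannot grow faster
     than cost along any feasible direction) give t <= X, hence r <= d <= 0;
   - since demand lies above its tangent at X and revenue covers cost,
     W(x^P) >= -d X^2 / 2;
   - every output y with total Y <= s has W(y) <= W(x^P) + (X d)^2 / (-2 l):
     for Y <= X the monopoly's profit advantage dominates, for X < Y <= s the
     first-order condition in the direction of y and the chord bound
     p(q) <= p(X) + l (q - X) on [X, s] (convexity) control the gain;
   - the social optimum can be scaled down to total s without losing welfare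
     (price <= c beyond s, marginal costs >= c), and its welfare is positive. *)

From Pilot Require Import Defs.
From Stdlib Require Import Reals Lra Lia ClassicalEpsilon Classical.
Open Scope R_scope.
From Coquelicot Require Import Coquelicot.

Lemma Rdiv_le_cross P Q u v : 0 < u -> 0 < v -> P * v <= Q * u -> P / u <= Q / v.
Proof.
intros Hu Hv H.
replace (P / u) with (P * v * / (u * v)) by (field; lra).
replace (Q / v) with (Q * u * / (u * v)) by (field; lra).
apply Rmult_le_compat_r; [left; apply Rinv_0_lt_compat; nra | exact H].
Qed.

Section ConvexSlopes.
Variable f : R -> R.
Hypothesis Hf : convex_nonneg f.

Lemma convex_three_point x y z : 0 <= x -> x < y -> y < z ->
  f y * (z - x) <= f x * (z - y) + f z * (y - x).
Proof.
intros Hx Hxy Hyz.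
set (l := (z - y) / (z - x)).
assert (Hl : 0 <= l <= 1).
{ unfold l; split.
  - apply Rmult_le_pos; [lra | left; apply Rinv_0_lt_compat; lra].
  - apply Rle_div_l; lra. }
pose proof (Hf x z l Hx ltac:(lra) Hl) as H.
replace (l * x + (1 - l) * z) with y in H by (unfold l; field; lra).
apply Rmult_le_compat_r with (r := z - x) in H; [|lra].
replace ((l * f x + (1 - l) * f z) * (z - x)) with (f x * (z - y) + f z * (y - x)) in H
  by (unfold l; field; lra).
exact H.
Qed.

Lemma convex_slope_mono a b c d : 0 <= a -> a < b -> c < d -> a <= c -> b <= d ->
  (f b - f a) / (b - a) <= (f d - f c) / (d - c).
Proof.
intros Ha Hab Hcd Hac Hbd.
apply Rle_trans with ((f d - f a) / (d - a)).
- destruct (Req_dec b d) as [->|E]; [lra|].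
  apply Rdiv_le_cross; try lra.
  pose proof (convex_three_point a b d Ha Hab ltac:(lra)). nra.
- destruct (Req_dec a c) as [->|E]; [lra|].
  apply Rdiv_le_cross; try lra.
  pose proof (convex_three_point a c d Ha ltac:(lra) Hcd). nra.
Qed.

End ConvexSlopes.

Lemma right_deriv_le_of_slopes (f : R -> R) x l k M : right_deriv f x l -> 0 < k ->
  (forall h, 0 < h <= k -> (f (x + h) - f x) / h <= M) -> l <= M.
Proof.
intros Hd Hk Hsl. apply Rnot_lt_le; intros Hlt.
destruct (Hd (l - M)) as [de [Hde Hclose]]; [lra|].
set (h := Rmin de k / 2).
assert (Hh : 0 < h < de /\ h <= k) by (unfold h, Rmin; destruct Rle_dec; lra).
specialize (Hclose h (proj1 Hh)). specialize (Hsl h ltac:(lra)).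
apply Rabs_def2 in Hclose. lra.
Qed.

Lemma right_deriv_ge_of_slopes (f : R -> R) x l M : right_deriv f x l ->
  (forall h, 0 < h -> M <= (f (x + h) - f x) / h) -> M <= l.
Proof.
intros Hd Hsl. apply Rnot_lt_le; intros Hlt.
destruct (Hd (M - l)) as [de [Hde Hclose]]; [lra|].
specialize (Hclose (de / 2) ltac:(lra)). specialize (Hsl (de / 2) ltac:(lra)).
apply Rabs_def2 in Hclose. lra.
Qed.

Lemma left_deriv_ge_of_slopes (f : R -> R) x l k M : left_deriv f x l -> 0 < k ->
  (forall h, - k <= h < 0 -> M <= (f (x + h) - f x) / h) -> M <= l.
Proof.
intros Hd Hk Hsl. apply Rnot_lt_le; intros Hlt.
destruct (Hd (M - l)) as [de [Hde Hclose]]; [lra|].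
set (h := - (Rmin de k / 2)).
assert (Hh : - de < h < 0 /\ - k <= h) by (unfold h, Rmin; destruct Rle_dec; lra).
specialize (Hclose h (proj1 Hh)). specialize (Hsl h ltac:(lra)).
apply Rabs_def2 in Hclose. lra.
Qed.

Lemma right_deriv_le_compare (f g : R -> R) x y l m :
  right_deriv f x l -> right_deriv g y m ->
  (forall h, 0 < h -> (f (x + h) - f x) / h <= (g (y + h) - g y) / h) -> l <= m.
Proof.
intros Hf Hg Hsl. apply Rnot_lt_le; intros Hlt.
destruct (Hf ((l - m) / 2)) as [d1 [Hd1 G1]]; [lra|].
destruct (Hg ((l - m) / 2)) as [d2 [Hd2 G2]]; [lra|].
set (h := Rmin d1 d2 / 2).
assert (Hh : 0 < h < d1 /\ 0 < h < d2) by (unfold h, Rmin; destruct Rle_dec; lra).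
specialize (G1 h (proj1 Hh)). specialize (G2 h (proj2 Hh)). specialize (Hsl h ltac:(lra)).
apply Rabs_def2 in G1. apply Rabs_def2 in G2. lra.
Qed.

Lemma right_deriv_of_derivable (f : R -> R) x l :
  derivable_pt_lim f x l -> right_deriv f x l.
Proof.
intros Hd eps Heps. destruct (Hd eps Heps) as [de Hde].
exists de; split; [apply cond_pos|].
intros h Hh. apply Hde; [lra | rewrite Rabs_right; lra].
Qed.

Lemma right_deriv_nonneg (f df : R -> R) :
  right_deriv f 0 (df 0) -> (forall q, 0 < q -> derivable_pt_lim f q (df q)) ->
  forall q, 0 <= q -> right_deriv f q (df q).
Proof.
intros H0 Hpos q [Hq | <-]; [|exact H0].
apply right_deriv_of_derivable, Hpos, Hq.
Qed.

Lemma right_deriv_mul_id (f : R -> R) x d :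
  right_deriv f x d -> right_deriv (fun q => f q * q) x (f x + x * d).
Proof.
intros Hd eps Heps.
set (e1 := eps / (2 * (Rabs x + 1))).
assert (He1 : 0 < e1) by (unfold e1; apply Rdiv_lt_0_compat; [|pose proof (Rabs_pos x)]; lra).
destruct (Hd e1 He1) as [de [Hde Hclose]].
set (k := Rmin 1 (eps / (2 * (Rabs d + 1)))).
assert (Hk : 0 < k <= 1 /\ k * (Rabs d + 1) <= eps / 2).
{ pose proof (Rabs_pos d).
  assert (0 < eps / (2 * (Rabs d + 1))) by (apply Rdiv_lt_0_compat; lra).
  assert (eps / (2 * (Rabs d + 1)) * (Rabs d + 1) = eps / 2) by (field; lra).
  unfold k, Rmin; destruct Rle_dec; split; try nra. }
exists (Rmin de k); split; [unfold Rmin; destruct Rle_dec; lra|].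
intros h Hh.
assert (Hhde : h < de /\ h <= k) by (unfold Rmin in Hh; destruct Rle_dec in Hh; lra).
set (sl := (f (x + h) - f x) / h).
specialize (Hclose h (conj (proj1 Hh) (proj1 Hhde))). fold sl in Hclose.
replace ((f (x + h) * (x + h) - f x * x) / h - (f x + x * d))
  with ((x + h) * (sl - d) + h * d) by (unfold sl; field; lra).
eapply Rle_lt_trans; [apply Rabs_triang|].
rewrite !Rabs_mult, (Rabs_right h) by lra.
assert (Hxh : Rabs (x + h) <= Rabs x + 1)
  by (eapply Rle_trans; [apply Rabs_triang | rewrite (Rabs_right h) by lra; lra]).
assert (Rabs (x + h) * Rabs (sl - d) <= (Rabs x + 1) * e1)
  by (apply Rmult_le_compat; try apply Rabs_pos; lra).
assert ((Rabs x + 1) * e1 = eps / 2) by (unfold e1; pose proof (Rabs_pos x); field; lra).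
assert (h * Rabs d <= k * Rabs d) by (apply Rmult_le_compat_r; [apply Rabs_pos | lra]).
lra.
Qed.

Section ConvexDerivatives.
Variable f : R -> R.
Hypothesis Hf : convex_nonneg f.

Lemma convex_secant_ge_right_deriv x d u v : 0 <= x -> right_deriv f x d ->
  x <= u < v -> d * (v - u) <= f v - f u.
Proof.
intros Hx Hd Huv.
assert (Hsl : d <= (f v - f u) / (v - u)).
{ apply (right_deriv_le_of_slopes f x d (v - x)); [exact Hd | lra |].
  intros h Hh.
  pose proof (convex_slope_mono f Hf x (x + h) u v Hx ltac:(lra) ltac:(lra) ltac:(lra) ltac:(lra)) as SM.
  replace (x + h - x) with h in SM by ring. exact SM. }
apply Rle_div_r in Hsl; lra.
Qed.

Lemma convex_secant_le_right_deriv x d u v : 0 <= u -> right_deriv f x d ->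
  u < v <= x -> f v - f u <= d * (v - u).
Proof.
intros Hu Hd Huv.
assert (Hsl : (f v - f u) / (v - u) <= d).
{ apply (right_deriv_ge_of_slopes f x d); [exact Hd|].
  intros h Hh.
  pose proof (convex_slope_mono f Hf u v x (x + h) Hu ltac:(lra) ltac:(lra) ltac:(lra) ltac:(lra)) as SM.
  replace (x + h - x) with h in SM by ring. exact SM. }
apply Rle_div_l in Hsl; lra.
Qed.

Lemma convex_secant_le_left_deriv x l u v : 0 <= u -> left_deriv f x l ->
  u < v <= x -> f v - f u <= l * (v - u).
Proof.
intros Hu Hd Huv.
assert (Hsl : (f v - f u) / (v - u) <= l).
{ apply (left_deriv_ge_of_slopes f x l (x - u)); [exact Hd | lra |].
  intros h Hh.
  replace ((f (x + h) - f x) / h) with ((f x - f (x + h)) / (x - (x + h))) by (field; lra).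
  apply (convex_slope_mono f Hf); lra. }
apply Rle_div_l in Hsl; lra.
Qed.

Lemma convex_right_deriv_mono x y dx dy : 0 <= x <= y ->
  right_deriv f x dx -> right_deriv f y dy -> dx <= dy.
Proof.
intros Hxy Hdx Hdy.
destruct (Req_dec x y) as [<-|Ne].
- apply (right_deriv_le_compare f f x x); auto. intros; lra.
- pose proof (convex_secant_ge_right_deriv x dx x y ltac:(lra) Hdx ltac:(lra)).
  pose proof (convex_secant_le_right_deriv y dy x y ltac:(lra) Hdy ltac:(lra)).
  nra.
Qed.

End ConvexDerivatives.

Lemma nonincr_right_deriv_nonpos (f : R -> R) x d : nonincr_nonneg f -> 0 <= x ->
  right_deriv f x d -> d <= 0.
Proof.
intros Hmono Hx Hd.
apply (right_deriv_le_of_slopes f x d 1); [exact Hd | lra |].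
intros h Hh. pose proof (Hmono x (x + h) ltac:(lra)).
apply Rle_div_l; lra.
Qed.

Lemma inf_level_set (f : R -> R) c s : cont_nonneg f ->
  is_inf (fun q => 0 <= q /\ f q = c) s -> 0 <= s /\ f s = c.
Proof.
intros Hc [Hlow Hgreat].
assert (Hs0 : 0 <= s) by (apply Hgreat; intros q [Hq _]; exact Hq).
split; [exact Hs0|].
apply NNPP; intros Hne.
assert (Heps : 0 < Rabs (f s - c)) by (apply Rabs_pos_lt; lra).
destruct (Hc s Hs0 _ Heps) as [de [Hde Hnear]].
assert (Hex : exists q, (0 <= q /\ f q = c) /\ q < s + de).
{ apply NNPP; intros Hn. assert (s + de <= s); [|lra].
  apply Hgreat. intros q Hq. apply Rnot_lt_le; intros Hlt. apply Hn; eauto. }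
destruct Hex as [q [[Hq0 Hqc] Hq]].
pose proof (Hlow q (conj Hq0 Hqc)).
specialize (Hnear q Hq0 ltac:(rewrite Rabs_right; lra)).
rewrite Hqc, Rabs_minus_sym in Hnear. lra.
Qed.

Section Integrals.
Variable f : R -> R.
Hypothesis Hc : cont_nonneg f.

Lemma ex_RInt_nonneg a b : 0 <= a -> 0 <= b -> ex_RInt f a b.
Proof.
intros Ha Hb.
apply ex_RInt_ext with (fun q => f (Rmax 0 q)).
{ intros x [H1 _]. f_equal. apply Rmax_right. unfold Rmin in H1; destruct Rle_dec; lra. }
apply (ex_RInt_continuous (V := R_CompleteNormedModule)). intros z _.
apply continuity_pt_filterlim. intros eps Heps.
destruct (Hc (Rmax 0 z) (Rmax_l _ _) eps Heps) as [d [Hd H]].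
exists d; split; [exact Hd|].
intros y [_ Hy]. simpl in *. unfold R_dist in *. apply H; [apply Rmax_l|].
unfold Rmax; destruct (Rle_dec 0 y); destruct (Rle_dec 0 z);
  unfold Rabs in *; repeat destruct Rcase_abs; lra.
Qed.

Lemma RInt_Defs a b : 0 <= a -> 0 <= b -> Defs.RInt f a b = RInt f a b.
Proof.
intros Ha Hb. unfold Defs.RInt.
pose proof (ex_RInt_Reals_0 _ _ _ (ex_RInt_nonneg a b Ha Hb)) as pr.
destruct (epsilon_spec (inhabits 0)
  (fun v => exists pr : Riemann_integrable f a b, RiemannInt pr = v)) as [pr' E].
{ exists (RiemannInt pr), pr; reflexivity. }
rewrite <- E. symmetry. apply RInt_Reals.
Qed.

Lemma RInt_from_0_diff a b : 0 <= a -> 0 <= b -> RInt f 0 b - RInt f 0 a = RInt f a b.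
Proof.
intros Ha Hb.
rewrite <- (RInt_Chasles f 0 a b) by (apply ex_RInt_nonneg; lra).
unfold plus; simpl. ring.
Qed.

End Integrals.

Lemma is_RInt_affine al be a b :
  is_RInt (fun q => al + be * q) a b (al * (b - a) + be * (b * b - a * a) / 2).
Proof.
set (F := fun q => al * q + be * (q * q) / 2).
replace (al * (b - a) + be * (b * b - a * a) / 2) with (minus (F b) (F a))
  by (unfold F, minus, plus, opp; simpl; field).
apply (is_RInt_derive (V := R_CompleteNormedModule)).
- intros x _. unfold F. auto_derive; auto. field.
- intros x _. apply continuity_pt_filterlim. apply derivable_continuous_pt.
  apply derivable_pt_plus; [apply derivable_pt_const|].
  apply derivable_pt_mult; [apply derivable_pt_const | apply derivable_pt_id].
Qed.

Lemma RInt_le_affine (f : R -> R) a b al be : cont_nonneg f -> 0 <= a -> a <= b ->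
  (forall q, a < q < b -> f q <= al + be * q) ->
  RInt f a b <= al * (b - a) + be * (b * b - a * a) / 2.
Proof.
intros Hc Ha Hab H. rewrite <- (is_RInt_unique _ _ _ _ (is_RInt_affine al be a b)).
apply RInt_le; auto; [apply ex_RInt_nonneg; auto; lra | eexists; apply is_RInt_affine].
Qed.

Lemma RInt_ge_affine (f : R -> R) a b al be : cont_nonneg f -> 0 <= a -> a <= b ->
  (forall q, a < q < b -> al + be * q <= f q) ->
  al * (b - a) + be * (b * b - a * a) / 2 <= RInt f a b.
Proof.
intros Hc Ha Hab H. rewrite <- (is_RInt_unique _ _ _ _ (is_RInt_affine al be a b)).
apply RInt_le; auto; [eexists; apply is_RInt_affine | apply ex_RInt_nonneg; auto; lra].
Qed.

Lemma sumN_ext N f g : (forall k, (k < N)%nat -> f k = g k) -> sumN N f = sumN N g.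
Proof. induction N; simpl; intros H; auto. rewrite IHN, H; auto. Qed.
Lemma sumN_plus N f g : sumN N (fun k => f k + g k) = sumN N f + sumN N g.
Proof. induction N; simpl; [ring | rewrite IHN; ring]. Qed.
Lemma sumN_minus N f g : sumN N (fun k => f k - g k) = sumN N f - sumN N g.
Proof. induction N; simpl; [ring | rewrite IHN; ring]. Qed.
Lemma sumN_scal N a f : sumN N (fun k => a * f k) = a * sumN N f.
Proof. induction N; simpl; [ring | rewrite IHN; ring]. Qed.
Lemma sumN_le N f g : (forall k, (k < N)%nat -> f k <= g k) -> sumN N f <= sumN N g.
Proof.
induction N; simpl; intros H; [lra|].
pose proof (H N ltac:(lia)). pose proof (IHN ltac:(intros; apply H; lia)). lra.
Qed.
Lemma sumN_zero N : sumN N (fun _ => 0) = 0.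
Proof. induction N; simpl; [ring | rewrite IHN; ring]. Qed.
Lemma sumN_nonneg N f : (forall k, (k < N)%nat -> 0 <= f k) -> 0 <= sumN N f.
Proof. intros H. rewrite <- (sumN_zero N). apply sumN_le. auto. Qed.
Lemma sumN_term_le N f n : (forall k, (k < N)%nat -> 0 <= f k) -> (n < N)%nat ->
  f n <= sumN N f.
Proof.
induction N; intros H Hn; [lia|]. simpl.
destruct (Nat.eq_dec n N) as [->|E].
- pose proof (sumN_nonneg N f ltac:(intros; apply H; lia)). lra.
- pose proof (IHN ltac:(intros; apply H; lia) ltac:(lia)). pose proof (H N ltac:(lia)). lra.
Qed.
Lemma sumN_if N n a b : (n < N)%nat ->
  sumN N (fun k => if Nat.eqb k n then a k else b k) = sumN N b + (a n - b n).
Proof.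
induction N; intros Hn; [lia|]. simpl.
destruct (Nat.eq_dec n N) as [->|E].
- rewrite Nat.eqb_refl, (sumN_ext N _ b); [ring|].
  intros k Hk. destruct (Nat.eqb_spec k N); [lia | auto].
- rewrite IHN by lia. destruct (Nat.eqb_spec N n); [lia | ring].
Qed.

Lemma min_over_le N f n : (n < N)%nat -> min_over N f <= f n.
Proof.
unfold min_over. intros Hn. assert (Hj : (n <= N - 1)%nat) by lia. clear Hn.
revert n Hj. induction (N - 1)%nat as [|k IH]; intros n Hj; simpl.
- replace n with 0%nat by lia. lra.
- destruct (Nat.eq_dec n (S k)) as [->|E]; [apply Rmin_r|].
  eapply Rle_trans; [apply Rmin_l | apply IH; lia].
Qed.

Lemma min_over_attained N f : (1 <= N)%nat -> exists n, (n < N)%nat /\ min_over N f = f n.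
Proof.
unfold min_over. intros HN.
assert (H : exists j, (j <= N - 1)%nat /\ minN (N - 1) f = f j).
{ induction (N - 1)%nat as [|k [j [Hj E]]]; simpl; [exists 0%nat; auto|].
  unfold Rmin; destruct Rle_dec; [exists j | exists (S k)]; split; auto; lia. }
destruct H as [j [Hj E]]. exists j; split; [lia | exact E].
Qed.

Lemma RInt_le_const (f : R -> R) a b M : cont_nonneg f -> 0 <= a -> a <= b ->
  (forall q, a < q < b -> f q <= M) -> RInt f a b <= M * (b - a).
Proof.
intros Hc Ha Hab H.
replace (M * (b - a)) with (M * (b - a) + 0 * (b * b - a * a) / 2) by field.
apply RInt_le_affine; auto. intros q Hq. specialize (H q Hq). lra.
Qed.

Lemma RInt_ge_const (f : R -> R) a b M : cont_nonneg f -> 0 <= a -> a <= b ->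
  (forall q, a < q < b -> M <= f q) -> M * (b - a) <= RInt f a b.
Proof.
intros Hc Ha Hab H.
replace (M * (b - a)) with (M * (b - a) + 0 * (b * b - a * a) / 2) by field.
apply RInt_ge_affine; auto. intros q Hq. specialize (H q Hq). lra.
Qed.

Definition total_cost (N : nat) (C : nat -> R -> R) (x : nat -> R) : R :=
  sumN N (fun n => C n (x n)).

Definition bump (x : nat -> R) (n : nat) (h : R) : nat -> R :=
  fun k => if Nat.eqb k n then x k + h else x k.

Section Market.
Variables (N : nat) (p : R -> R) (C : nat -> R -> R).
Hypothesis HC0 : forall n, (n < N)%nat -> C n 0 = 0.
Hypothesis HCconv : forall n, (n < N)%nat -> convex_nonneg (C n).
Hypothesis Hpcont : cont_nonneg p.
Hypothesis Hpmono : nonincr_nonneg p.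
Hypothesis Hpconv : convex_nonneg p.

Lemma total_nonneg x : nonneg_vec N x -> 0 <= total N x.
Proof. intros Hx. apply sumN_nonneg, Hx. Qed.

Lemma total_zero : total N (fun _ => 0) = 0.
Proof. apply sumN_zero. Qed.

Lemma total_cost_zero : total_cost N C (fun _ => 0) = 0.
Proof. unfold total_cost. rewrite (sumN_ext N _ (fun _ => 0)) by auto. apply sumN_zero. Qed.

Lemma bump_nonneg x n h : nonneg_vec N x -> 0 <= h -> nonneg_vec N (bump x n h).
Proof. intros Hx Hh k Hk. unfold bump. specialize (Hx k Hk). destruct Nat.eqb; lra. Qed.

Lemma total_bump x n h : (n < N)%nat -> total N (bump x n h) = total N x + h.
Proof. intros Hn. unfold total, bump. rewrite sumN_if by exact Hn. ring. Qed.

Lemma total_cost_bump x n h : (n < N)%nat ->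
  total_cost N C (bump x n h) = total_cost N C x + (C n (x n + h) - C n (x n)).
Proof.
intros Hn. unfold total_cost, bump.
rewrite (sumN_ext N _ (fun k => if Nat.eqb k n then C k (x k + h) else C k (x k))).
- apply sumN_if, Hn.
- intros k _. destruct (Nat.eqb k n); reflexivity.
Qed.

Lemma welfare_RInt x : nonneg_vec N x ->
  welfare N p C x = RInt p 0 (total N x) - total_cost N C x.
Proof.
intros Hx. unfold welfare.
rewrite (RInt_Defs p Hpcont 0 (total N x)); [reflexivity | lra | apply total_nonneg, Hx].
Qed.

Section Monopoly.
Variable xP : nat -> R.
Hypothesis HP : monopoly_output N p C xP.
Local Notation X := (total N xP).

Lemma monopoly_nonneg : nonneg_vec N xP.
Proof. exact (proj1 HP). Qed.

Lemma monopoly_total_nonneg : 0 <= X.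
Proof. apply total_nonneg, monopoly_nonneg. Qed.

Lemma monopoly_profit_ge y : nonneg_vec N y ->
  p (total N y) * total N y - total_cost N C y <= p X * X - total_cost N C xP.
Proof. intros Hy. exact (proj2 HP y Hy). Qed.

(* Producing nothing is feasible, so the monopoly's revenue covers its cost. *)
Lemma monopoly_cost_le_revenue : total_cost N C xP <= p X * X.
Proof.
pose proof (monopoly_profit_ge (fun _ => 0) ltac:(intros k _; lra)) as Hopt.
rewrite total_zero, total_cost_zero in Hopt. lra.
Qed.

(* First-order condition: marginal revenue at X is at most the marginal cost of
   any single supplier at X (its own marginal cost at x_n <= X is smaller still). *)
Lemma monopoly_marginal_supplier n d e : (n < N)%nat ->
  right_deriv p X d -> right_deriv (C n) X e -> p X + X * d <= e.
Proof.
intros Hn Hd He.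
apply (right_deriv_le_compare (fun q => p q * q) (C n) X X); [apply right_deriv_mul_id, Hd | exact He |].
intros h Hh.
pose proof (monopoly_profit_ge _ (bump_nonneg xP n h monopoly_nonneg ltac:(lra))) as Hopt.
rewrite total_bump, total_cost_bump in Hopt by exact Hn.
assert (Hxn : xP n <= X) by (apply sumN_term_le; [apply monopoly_nonneg | exact Hn]).
pose proof (convex_slope_mono (C n) (HCconv n Hn) (xP n) (xP n + h) X (X + h)
  (monopoly_nonneg n Hn) ltac:(lra) ltac:(lra) Hxn ltac:(lra)) as Hslope.
replace (xP n + h - xP n) with h in Hslope by ring.
replace (X + h - X) with h in Hslope by ring.
eapply Rle_trans; [|exact Hslope].
unfold Rdiv. apply Rmult_le_compat_r; [left; apply Rinv_0_lt_compat |]; lra.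
Qed.

(* First-order condition in the direction of any output y with larger total:
   moving from xP towards y, revenue grows at most as fast as the (convex) cost. *)
Lemma monopoly_marginal_direction y d : nonneg_vec N y -> X < total N y ->
  right_deriv p X d ->
  (total N y - X) * (p X + X * d) <= total_cost N C y - total_cost N C xP.
Proof.
intros Hy HXY Hd.
assert (HV : 0 < total N y - X) by lra.
assert (Hsl : p X + X * d <= (total_cost N C y - total_cost N C xP) / (total N y - X)).
{ apply (right_deriv_le_of_slopes (fun q => p q * q) X _ (total N y - X));
    [apply right_deriv_mul_id, Hd | exact HV |].
  intros u Hu. set (l := u / (total N y - X)).
  assert (Hl : 0 < l <= 1) by (unfold l; split; [apply Rdiv_lt_0_compat | apply Rle_div_l]; lra).
  set (z := fun k => l * y k + (1 - l) * xP k).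
  assert (Hz : nonneg_vec N z).
  { intros k Hk. unfold z. pose proof (Hy k Hk). pose proof (monopoly_nonneg k Hk). nra. }
  assert (HZ : total N z = X + u).
  { unfold total, z. rewrite sumN_plus, !sumN_scal. fold (total N y) (total N xP).
    unfold l. field. lra. }
  assert (HCz : total_cost N C z <= l * total_cost N C y + (1 - l) * total_cost N C xP).
  { unfold total_cost. rewrite <- !sumN_scal, <- sumN_plus. apply sumN_le. intros k Hk.
    apply (HCconv k Hk); [apply Hy, Hk | apply monopoly_nonneg, Hk | lra]. }
  pose proof (monopoly_profit_ge z Hz) as Hopt. rewrite HZ in Hopt.
  assert (Hlu : l * (total N y - X) = u) by (unfold l; field; lra).
  apply Rdiv_le_cross; [lra | exact HV |].
  assert (Hrev : p (X + u) * (X + u) - p X * X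
    <= l * (total_cost N C y - total_cost N C xP)) by lra.
  apply Rmult_le_compat_r with (r := total N y - X) in Hrev; [|lra].
  assert ((total_cost N C y - total_cost N C xP) * u
    = l * (total_cost N C y - total_cost N C xP) * (total N y - X)) by (rewrite <- Hlu; ring).
  lra. }
apply Rle_div_r in Hsl; lra.
Qed.

(* Below X demand lies above its tangent at X, so the consumers' surplus is at
   least -d X^2/2 beyond the revenue, which covers the cost. *)
Lemma monopoly_welfare_lower d : right_deriv p X d -> - d * (X * X) / 2 <= welfare N p C xP.
Proof.
intros Hd. pose proof monopoly_total_nonneg as HX0.
rewrite welfare_RInt by exact monopoly_nonneg.
pose proof monopoly_cost_le_revenue.
assert (Hint : (p X - d * X) * (X - 0) + d * (X * X - 0 * 0) / 2 <= RInt p 0 X).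
{ apply RInt_ge_affine; [exact Hpcont | lra | exact HX0 |].
  intros q Hq. pose proof (convex_secant_le_right_deriv p Hpconv X d q X ltac:(lra) Hd ltac:(lra)).
  lra. }
lra.
Qed.

(* Outputs with total at most X yield no more welfare than xP: the monopoly's
   profit advantage outweighs the consumers' surplus lost between them. *)
Lemma welfare_below_monopoly y : nonneg_vec N y -> total N y <= X ->
  welfare N p C y <= welfare N p C xP.
Proof.
intros Hy HYX. pose proof (total_nonneg y Hy) as HY0.
rewrite !welfare_RInt by (exact Hy || exact monopoly_nonneg).
pose proof (monopoly_profit_ge y Hy).
pose proof (RInt_from_0_diff p Hpcont _ _ HY0 monopoly_total_nonneg).
assert (p X * (X - total N y) <= RInt p (total N y) X).
{ apply RInt_ge_const; auto. intros q Hq. apply Hpmono; lra. }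
pose proof (Hpmono _ _ (conj HY0 HYX)).
assert (total N y * p X <= total N y * p (total N y)) by (apply Rmult_le_compat_l; lra).
lra.
Qed.

Lemma welfare_above_monopoly y d D Z : right_deriv p X d -> 0 < D ->
  (forall q, X <= q <= Z -> p q <= p X - D * (q - X)) ->
  nonneg_vec N y -> X < total N y <= Z ->
  welfare N p C y <= welfare N p C xP + (X * d) * (X * d) / (2 * D).
Proof.
intros Hd HD Hslope Hy HY.
pose proof monopoly_total_nonneg as HX0.
rewrite !welfare_RInt by (exact Hy || exact monopoly_nonneg).
pose proof (monopoly_marginal_direction y d Hy (proj1 HY) Hd) as Hfoc.
pose proof (RInt_from_0_diff p Hpcont X (total N y) HX0 ltac:(lra)) as Hsplit.
assert (Hint : RInt p X (total N y)
  <= (p X + D * X) * (total N y - X) + - D * (total N y * total N y - X * X) / 2).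
{ apply RInt_le_affine; auto; [lra|]. intros q Hq. pose proof (Hslope q ltac:(lra)). lra. }
set (V := total N y - X) in *.
assert (Hsq : 0 <= (X * d + D * V) * (X * d + D * V) / (2 * D))
  by (apply Rmult_le_pos; [apply Rle_0_sqr | left; apply Rinv_0_lt_compat; lra]).
assert (Hid : (X * d + D * V) * (X * d + D * V) / (2 * D)
  = (X * d) * (X * d) / (2 * D) + X * d * V + D * V * V / 2) by (field; lra).
assert (Haff : (p X + D * X) * V + - D * (total N y * total N y - X * X) / 2
  = p X * V - D * V * V / 2) by (unfold V; field).
lra.
Qed.

Lemma welfare_dominated_by_monopoly y d s l : right_deriv p X d ->
  0 <= s -> left_deriv p s l -> l < 0 -> nonneg_vec N y -> total N y <= s ->
  welfare N p C y <= welfare N p C xP + (X * d) * (X * d) / (2 * - l).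
Proof.
intros Hd Hs0 Hl Hlneg Hy HYs.
assert (0 <= (X * d) * (X * d) / (2 * - l))
  by (apply Rmult_le_pos; [apply Rle_0_sqr | left; apply Rinv_0_lt_compat; lra]).
destruct (Rle_or_lt (total N y) X) as [HYX|HXY].
- pose proof (welfare_below_monopoly y Hy HYX). lra.
- assert (Hchord : forall q, X <= q <= s -> p q <= p X - - l * (q - X)).
  { intros q Hq. destruct (Req_dec q X) as [->|Ne]; [lra|].
    pose proof (convex_secant_le_left_deriv p Hpconv s l X q monopoly_total_nonneg Hl ltac:(lra)).
    lra. }
  apply (welfare_above_monopoly y d (- l) s Hd ltac:(lra) Hchord Hy). lra.
Qed.

End Monopoly.

Lemma welfare_truncation (dC0 : nat -> R) c s x : 0 <= s ->
  (forall q, s <= q -> p q <= c) ->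
  (forall n, (n < N)%nat -> right_deriv (C n) 0 (dC0 n) /\ c <= dC0 n) ->
  nonneg_vec N x ->
  exists y, nonneg_vec N y /\ total N y <= s /\ welfare N p C x <= welfare N p C y.
Proof.
intros Hs0 Hpc Hmc Hx. pose proof (total_nonneg x Hx) as HX0.
destruct (Rle_or_lt (total N x) s) as [Hle|Hgt]; [exists x; auto using Rle_refl|].
set (l := s / total N x).
assert (Hl : 0 <= l < 1).
{ unfold l; split; [apply Rmult_le_pos; [lra | left; apply Rinv_0_lt_compat; lra]
                   | apply Rlt_div_l; lra]. }
assert (Hy : nonneg_vec N (fun k => l * x k)) by (intros k Hk; pose proof (Hx k Hk); nra).
assert (HY : total N (fun k => l * x k) = s)
  by (rewrite (sumN_scal N l x : total N _ = l * total N x); unfold l; field; lra).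
exists (fun k => l * x k); split; [exact Hy | split; [lra|]].
rewrite !welfare_RInt by assumption. rewrite HY.
pose proof (RInt_from_0_diff p Hpcont s (total N x) Hs0 HX0).
assert (RInt p s (total N x) <= c * (total N x - s)).
{ apply RInt_le_const; auto; [lra|]. intros q Hq. apply Hpc; lra. }
assert (Hcost : c * ((1 - l) * total N x)
  <= total_cost N C x - total_cost N C (fun k => l * x k)).
{ unfold total_cost, total. rewrite <- sumN_minus, <- !sumN_scal. apply sumN_le.
  intros k Hk. destruct (Hmc k Hk) as [Hd Hc]. destruct (Hx k Hk) as [Hxk|<-].
  - pose proof (convex_secant_ge_right_deriv (C k) (HCconv k Hk) 0 (dC0 k) (l * x k) (x k)
      (Rle_refl 0) Hd ltac:(split; nra)).
    assert (0 <= (dC0 k - c) * ((1 - l) * x k)) by (apply Rmult_le_pos; nra).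
    lra.
  - rewrite !Rmult_0_r, !HC0 by exact Hk. lra. }
assert (c * ((1 - l) * total N x) = c * (total N x - s)) by (unfold l; field; lra).
lra.
Qed.

Lemma welfare_positive_output n0 e : (n0 < N)%nat ->
  right_deriv (C n0) 0 e -> e < p 0 ->
  exists y, nonneg_vec N y /\ 0 < welfare N p C y.
Proof.
intros Hn0 He Hep.
set (eps := (p 0 - e) / 2). assert (Heps : 0 < eps) by (unfold eps; lra).
destruct (He eps Heps) as [d1 [Hd1 Hcost]].
destruct (Hpcont 0 (Rle_refl 0) eps Heps) as [d2 [Hd2 Hprice]].
set (h := Rmin d1 d2 / 2).
assert (Hh : 0 < h < d1 /\ h < d2) by (unfold h, Rmin; destruct Rle_dec; lra).
set (y := bump (fun _ => 0) n0 h).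
assert (Hy : nonneg_vec N y) by (apply bump_nonneg; [intros k _ |]; lra).
exists y; split; [exact Hy|].
rewrite welfare_RInt by exact Hy. unfold y.
rewrite total_bump, total_cost_bump, total_cost_zero, total_zero by exact Hn0. cbv beta.
rewrite HC0 by exact Hn0. replace (0 + h) with h by ring.
specialize (Hcost h (proj1 Hh)). rewrite HC0, Rplus_0_l in Hcost by exact Hn0.
apply Rabs_def2 in Hcost. destruct Hcost as [Hcost _].
assert (Hch : C n0 h - 0 < (e + eps) * h) by (apply Rlt_div_l; lra).
specialize (Hprice h ltac:(lra) ltac:(rewrite Rminus_0_r, Rabs_right; lra)).
apply Rabs_def2 in Hprice. destruct Hprice as [_ Hprice].
assert (Hint : p h * (h - 0) <= RInt p 0 h).
{ apply RInt_ge_const; [exact Hpcont | lra | lra |]. intros q Hq. apply Hpmono; lra. }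
assert ((p 0 - eps) * h < p h * h) by (apply Rmult_lt_compat_r; lra).
assert (eps * 2 = p 0 - e) by (unfold eps; field).
nra.
Qed.

End Market.

Lemma efficiency_arith l r d X WP WS : l < 0 -> r <= d -> d <= 0 -> 0 < WS ->
  - d * (X * X) / 2 <= WP -> WS <= WP + (X * d) * (X * d) / (2 * - l) ->
  l / (3 * l + r) <= WP / WS.
Proof.
intros Hl Hrd Hd HWS HWP HWS'.
assert (HWP0 : 0 <= WP) by nra.
assert (Hsq : (X * d) * (X * d) / (2 * - l) * - l = - d * (- d * (X * X) / 2)) by (field; lra).
assert (- d * (- d * (X * X) / 2) <= - d * WP) by (apply Rmult_le_compat_l; lra).
assert (- d * WP <= - r * WP) by (apply Rmult_le_compat_r; lra).
assert (WS * - l <= (WP + (X * d) * (X * d) / (2 * - l)) * - l) by (apply Rmult_le_compat_r; lra).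
assert (WP * - l <= WP * (3 * - l)) by (apply Rmult_le_compat_l; lra).
replace (l / (3 * l + r)) with (- l / (3 * - l + - r)) by (field; lra).
apply Rdiv_le_cross; [lra | exact HWS | nra].
Qed.
Theorem corollary3
  (N : nat) (p : R -> R) (C : nat -> R -> R)
  (dC : nat -> R -> R)          (* dC n q = C_n'(q); dC n 0 is the right derivative at 0 *)
  (dpR dpL : R -> R)            (* right / left derivatives of p *)
  (s t : R)
  (HN : (1 <= N)%nat)
  (* Assumption 1 *)
  (HC0 : forall n, (n < N)%nat -> C n 0 = 0)
  (HCcont : forall n, (n < N)%nat -> cont_nonneg (C n))
  (HCconv : forall n, (n < N)%nat -> convex_nonneg (C n))
  (HCmono : forall n, (n < N)%nat -> nondecr_nonneg (C n))
  (HCder : forall n, (n < N)%nat -> forall q, 0 < q -> derivable_pt_lim (C n) q (dC n q))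
  (HCder_cont : forall n, (n < N)%nat -> forall q, 0 < q -> continuity_pt (dC n) q)
  (HCder0 : forall n, (n < N)%nat -> right_deriv (C n) 0 (dC n 0))
  (* Assumption 2 *)
  (Hpcont : cont_nonneg p)
  (Hpnonneg : forall q, 0 <= q -> 0 <= p q)
  (Hpmono : nonincr_nonneg p)
  (Hp0 : 0 < p 0)
  (HpR : forall q, 0 <= q -> right_deriv p q (dpR q))
  (HpL : forall q, 0 < q -> left_deriv p q (dpL q))
  (* Assumption 3 *)
  (HA3 : exists R0, 0 < R0 /\ p R0 <= min_over N (fun n => dC n 0))
  (* Assumption 4 *)
  (HA4 : min_over N (fun n => dC n 0) < p 0)
  (* p convex *)
  (Hpconv : convex_nonneg p)
  (* definitions of s and t *)
  (Hs : is_inf (fun q => 0 <= q /\ p q = min_over N (fun n => dC n 0)) s)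
  (Ht : is_inf (fun q => 0 <= q /\
          p q + q * dpR q <= min_over N (fun n => dC n q)) t)
  (Hds : dpL s < 0) :
  forall xP xS, monopoly_output N p C xP -> social_optimum N p C xS ->
    dpL s / (3 * dpL s + dpR t) <= efficiency N p C xS xP.
Proof.
intros xP xS HP HS.
set (c := min_over N (fun n => dC n 0)) in *.
destruct (inf_level_set p c s Hpcont Hs) as [Hs0 Hps].
assert (Hspos : 0 < s) by (destruct Hs0 as [|<-]; [assumption | lra]).
set (X := total N xP).
pose proof (monopoly_total_nonneg N p C xP HP) as HX0.
assert (HCd : forall n, (n < N)%nat -> forall q, 0 <= q -> right_deriv (C n) q (dC n q))
  by (intros n Hn; apply right_deriv_nonneg; auto).
(* By the first-order condition X belongs to the set whose infimum is t. *)
assert (HXt : t <= X).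
{ apply (proj1 Ht); split; [exact HX0|].
  destruct (min_over_attained N (fun n => dC n X) HN) as [n [Hn ->]].
  apply (monopoly_marginal_supplier N p C HCconv xP HP n); auto. }
assert (Ht0 : 0 <= t) by (apply (proj2 Ht); intros q [Hq _]; exact Hq).
assert (Hrd : dpR t <= dpR X) by (apply (convex_right_deriv_mono p Hpconv t X); auto).
assert (HdX : dpR X <= 0) by (apply (nonincr_right_deriv_nonpos p X); auto).
(* The social optimum may be replaced by an output with total at most s ... *)
destruct (welfare_truncation N p C HC0 HCconv Hpcont (fun n => dC n 0) c s xS Hs0)
  as [y [Hy [HYs HWy]]]; [| |apply HS|].
- intros q Hq. rewrite <- Hps. apply Hpmono; lra.
- intros n Hn. split; [apply HCder0, Hn | apply (min_over_le N (fun n => dC n 0)), Hn].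
- (* ... and it has positive welfare, since some marginal cost at 0 is below p 0. *)
  destruct (min_over_attained N (fun n => dC n 0) HN) as [n0 [Hn0 Hc0]].
  destruct (welfare_positive_output N p C HC0 Hpcont Hpmono n0 (dC n0 0) Hn0 (HCder0 n0 Hn0))
    as [y0 [Hy0 HW0]]; [rewrite <- Hc0; exact HA4|].
  pose proof (proj2 HS y0 Hy0).
  pose proof (welfare_dominated_by_monopoly N p C HCconv Hpcont Hpmono Hpconv xP HP
    y (dpR X) s (dpL s) (HpR X HX0) Hs0 (HpL s Hspos) Hds Hy HYs) as Hdom.
  fold X in Hdom.
  unfold efficiency.
  apply (efficiency_arith _ _ (dpR X) X); try lra.
  apply (monopoly_welfare_lower N p C HC0 Hpcont Hpconv xP HP), HpR, HX0.
Qed.
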